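(* Let $(Q,\cdot)$ be a quasigroup. If $Q$ satisfies $(xy)(zz)=(x(yz))z$ for all $x,y,z\in Q$ (LG2-quasigroup), then $Q$ is a right loop. If $Q$ satisfies $x(x(yz))=((xx)y)z$ for all $x,y,z\in Q$ (LC3-quasigroup), then $Q$ is a left loop.
   Context: A quasigroup is a set $Q$ with a binary operation $\cdot$ (written as juxtaposition) such that for all $a,b\in Q$ each of the equations $ax=b$ and $ya=b$ has a unique solution in $Q$. A quasigroup $Q$ is a left loop if there is $e\in Q$ with $ea=a$ for all $a\in Q$, and a right loop if there is $e\in Q$ with $ae=a$ for all $a\in Q$. *)

Definition is_quasigroup {Q : Type} (mul : Q -> Q -> Q) : Prop :=
  (forall a b : Q, exists! x : Q, mul a x = b) /\
  (forall a b : Q, exists! y : Q, mul y a = b).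

Definition is_left_loop {Q : Type} (mul : Q -> Q -> Q) : Prop :=
  is_quasigroup mul /\ exists e : Q, forall a : Q, mul e a = a.

Definition is_right_loop {Q : Type} (mul : Q -> Q -> Q) : Prop :=
  is_quasigroup mul /\ exists e : Q, forall a : Q, mul a e = a.

Definition LG2 {Q : Type} (mul : Q -> Q -> Q) : Prop :=
  forall x y z : Q, mul (mul x y) (mul z z) = mul (mul x (mul y z)) z.

Definition LC3 {Q : Type} (mul : Q -> Q -> Q) : Prop :=
  forall x y z : Q, mul x (mul x (mul y z)) = mul (mul (mul x x) y) z.


(* Fix any a and let f solve a f = a.  LG2 at (a, a, f) gives (aa)(ff) = (aa)f,
   so ff = f; then LG2 at (a, y, f) reads (ay)f = (a(yf))f, and cancelling f and
   then a gives yf = y.  Dually, let e solve e a = a and write a = yz; LC3 at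
   (e, y, z) reads yz = ((ee)y)z, and cancelling z gives (ee)y = y. *)

Section Quasigroup.

Variables (Q : Type) (mul : Q -> Q -> Q).
Hypothesis quasigroup_mul : is_quasigroup mul.

Lemma quasigroup_ldiv (a b : Q) : exists x, mul a x = b.
Proof.
  destruct (proj1 quasigroup_mul a b) as [x [Hx _]].
  exists x; exact Hx.
Qed.

Lemma quasigroup_rdiv (a b : Q) : exists y, mul y a = b.
Proof.
  destruct (proj2 quasigroup_mul a b) as [y [Hy _]].
  exists y; exact Hy.
Qed.

Lemma quasigroup_cancel_l (a x y : Q) : mul a x = mul a y -> x = y.
Proof.
  intros E.
  destruct (proj1 quasigroup_mul a (mul a x)) as [w [_ Uw]].
  rewrite <- (Uw x eq_refl).
  apply Uw; symmetry; exact E.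
Qed.

Lemma quasigroup_cancel_r (a x y : Q) : mul x a = mul y a -> x = y.
Proof.
  intros E.
  destruct (proj2 quasigroup_mul a (mul x a)) as [w [_ Uw]].
  rewrite <- (Uw x eq_refl).
  apply Uw; symmetry; exact E.
Qed.

Lemma LG2_right_unit_idem (a f : Q) :
  LG2 mul -> mul a f = a -> mul f f = f.
Proof.
  intros HG Haf.
  apply (quasigroup_cancel_l (mul a a)).
  rewrite (HG a a f), Haf.
  reflexivity.
Qed.

Lemma LG2_right_unit (a f : Q) :
  LG2 mul -> mul a f = a -> forall y, mul y f = y.
Proof.
  intros HG Haf y.
  assert (Hff : mul f f = f) by exact (LG2_right_unit_idem a f HG Haf).
  apply (quasigroup_cancel_l a), (quasigroup_cancel_r f).
  rewrite <- (HG a y f), Hff.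
  reflexivity.
Qed.

Lemma LC3_left_unit (a e : Q) :
  LC3 mul -> mul e a = a -> forall y, mul (mul e e) y = y.
Proof.
  intros HC Hea y.
  destruct (quasigroup_ldiv y a) as [z Hz].
  apply (quasigroup_cancel_r z).
  rewrite <- (HC e y z), Hz, Hea, Hea.
  reflexivity.
Qed.

Lemma LG2_right_loop : inhabited Q -> LG2 mul -> is_right_loop mul.
Proof.
  intros [a] HG.
  split; [exact quasigroup_mul |].
  destruct (quasigroup_ldiv a a) as [f Haf].
  exists f; exact (LG2_right_unit a f HG Haf).
Qed.

Lemma LC3_left_loop : inhabited Q -> LC3 mul -> is_left_loop mul.
Proof.
  intros [a] HC.
  split; [exact quasigroup_mul |].
  destruct (quasigroup_rdiv a a) as [e Hea].
  exists (mul e e); exact (LC3_left_unit a e HC Hea).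
Qed.

End Quasigroup.

Theorem mainTheorem5 (Q : Type) (mul : Q -> Q -> Q) :
  inhabited Q -> is_quasigroup mul ->
  (LG2 mul -> is_right_loop mul) /\ (LC3 mul -> is_left_loop mul).
Proof.
  intros HQ Hmul.
  split.
  - exact (LG2_right_loop Q mul Hmul HQ).
  - exact (LC3_left_loop Q mul Hmul HQ).
Qed.
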